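(* In the setup below (no gauge condition imposed on $|\Psi_x^{SE}\rangle$), assume $p(\omega|x)>0$ for all $\omega\in\checkmark$. Then $\langle F_{\Omega,x}\rangle$ is real, $I^Q=4(\langle G_{\Omega,x}\rangle-\langle F_{\Omega,x}\rangle^2)$, and the measurement encoding is lossless, i.e. $\sum_{\omega\in\checkmark}p(\omega|x)I(\sigma_{x|\omega})=I^Q$, if and only if $$\langle F_{\omega,x}\rangle=\langle F_{\Omega,x}\rangle\langle E_{\omega,x}\rangle\ \ \text{for all }\omega\in\checkmark,\qquad \langle G_{\times,x}\rangle=\langle F_{\Omega,x}\rangle\langle F_{\times,x}^\dagger\rangle .$$ In particular, losslessness requires $\partial_x\langle E_{\omega,x}\rangle=0$ for all $\omega\in\checkmark$.
   Context: Setup: finite-dimensional $\mathcal H_S,\mathcal H_E$; unit vectors $|\psi_i\rangle\in\mathcal H_S$, $|\phi_i^E\rangle\in\mathcal H_E$; a $C^1$ family of unitaries $U_x^{SE}$ on $\mathcal H_S\otimes\mathcal H_E$; an orthonormal basis $\{|\pi_\omega^E\rangle\}_{\omega\in\Omega}$ of $\mathcal H_E$, $\Omega=\checkmark\sqcup\times$. $|\Psi_x^{SE}\rangle=U_x^{SE}(|\psi_i\rangle\otimes|\phi_i^E\rangle)$, $M_{\omega,x}=\langle\pi_\omega^E|U_x^{SE}|\phi_i^E\rangle$, $|\tilde\psi_{x|\omega}\rangle=M_{\omega,x}|\psi_i\rangle$, $p(\omega|x)=\|\tilde\psi_{x|\omega}\|^2$, $\sigma_{x|\omega}=|\tilde\psi_{x|\omega}\rangle\langle\tilde\psi_{x|\omega}|/p(\omega|x)$.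 QFI of a normalized pure state: $I(|\phi_x\rangle)=4(\langle\partial_x\phi_x|\partial_x\phi_x\rangle-|\langle\phi_x|\partial_x\phi_x\rangle|^2)$; $I^Q=I(|\Psi_x^{SE}\rangle)$. Define $E_{\omega,x}=M_{\omega,x}^\dagger M_{\omega,x}$, $F_{\omega,x}=i\,\partial_xM_{\omega,x}^\dagger M_{\omega,x}$, $G_{\omega,x}=\partial_xM_{\omega,x}^\dagger\partial_xM_{\omega,x}$, and for $S\subseteq\Omega$, $X_{S,x}=\sum_{\omega\in S}X_{\omega,x}$. $\langle A\rangle=\langle\psi_i|A|\psi_i\rangle$. *)

From HB Require Import structures.
From mathcomp Require Import all_boot all_order all_algebra.
From mathcomp Require Import complex.
From mathcomp Require Import all_classical all_reals all_analysis.
Set Implicit Arguments. Unset Strict Implicit. Unset Printing Implicit Defensive.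
Import Order.TTheory GRing.Theory Num.Theory.
Import numFieldNormedType.Exports.
Local Open Scope ring_scope.

Section QFI.
Variable R : realType.
Local Notation C := (R[i]).

Definition adj m n (A : 'M[C]_(m, n)) : 'M[C]_(n, m) := (map_mx Num.conj A)^T.
Definition dotc n (u v : 'cV[C]_n) : C := (adj u *m v) 0 0.
Definition expect n (psi : 'cV[C]_n) (A : 'M[C]_n) : C := dotc psi (A *m psi).
Definition unitary n (A : 'M[C]_n) : Prop := adj A *m A = 1%:M /\ A *m adj A = 1%:M.

Definition cderiv (f : R -> C) (t : R) : C :=
  (derive1 (@complex.Re R \o f) t +i* derive1 (@complex.Im R \o f) t)%C.
Definition mderiv m n (f : R -> 'M[C]_(m, n)) (t : R) : 'M[C]_(m, n) :=
  \matrix_(i, j) cderiv (fun s => f s i j) t.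

Definition C1c (f : R -> C) : Prop :=
  (forall t, derivable (@complex.Re R \o f) t 1) /\ (forall t, derivable (@complex.Im R \o f) t 1) /\
  continuous (derive1 (@complex.Re R \o f)) /\ continuous (derive1 (@complex.Im R \o f)).
Definition C1mx m n (f : R -> 'M[C]_(m, n)) : Prop :=
  forall i j, C1c (fun t => f t i j).

(* QFI of a normalized pure state family *)
Definition QFI n (phi : R -> 'cV[C]_n) (x : R) : C :=
  4%:R * (dotc (mderiv phi x) (mderiv phi x) - `|dotc (phi x) (mderiv phi x)| ^+ 2).

(* Kronecker product of column vectors, index (mxvec_index s e) <-> (s, e) *)
Definition kronv m n (u : 'cV[C]_m) (v : 'cV[C]_n) : 'cV[C]_(m * n) :=
  (mxvec (u *m v^T))^T.

Variables (dS dE : nat) (psi : 'cV[C]_dS) (phiE : 'cV[C]_dE)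
  (U : R -> 'M[C]_(dS * dE)) (P : 'M[C]_dE).
(* columns of P are the basis vectors pi_omega, omega : 'I_dE *)

Definition PsiSE (t : R) : 'cV[C]_(dS * dE) := U t *m kronv psi phiE.
Definition Mop (w : 'I_dE) (t : R) : 'M[C]_dS :=
  \matrix_(s', s) \sum_(e' < dE) \sum_(e < dE)
     (P e' w)^* * U t (mxvec_index s' e') (mxvec_index s e) * phiE e 0.
Definition psit (w : 'I_dE) (t : R) : 'cV[C]_dS := Mop w t *m psi.
Definition prob (w : 'I_dE) (t : R) : C := dotc (psit w t) (psit w t).
(* normalized post-measurement pure state (vector representative of sigma_{x|w}) *)
Definition sigvec (w : 'I_dE) (t : R) : 'cV[C]_dS := (sqrtC (prob w t))^-1 *: psit w t.
Definition Eop (w : 'I_dE) (t : R) : 'M[C]_dS := adj (Mop w t) *m Mop w t.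
Definition Fop (w : 'I_dE) (t : R) : 'M[C]_dS :=
  'i%C *: (adj (mderiv (Mop w) t) *m Mop w t).
Definition Gop (w : 'I_dE) (t : R) : 'M[C]_dS := adj (mderiv (Mop w) t) *m mderiv (Mop w) t.
Definition Eset (S : {set 'I_dE}) t := \sum_(w in S) Eop w t.
Definition Fset (S : {set 'I_dE}) t := \sum_(w in S) Fop w t.
Definition Gset (S : {set 'I_dE}) t := \sum_(w in S) Gop w t.
End QFI.

From HB Require Import structures.
From mathcomp Require Import all_boot all_order all_algebra.
From mathcomp Require Import complex.
From mathcomp Require Import all_classical all_reals all_analysis.
From mathcomp Require Import ring.
Import Order.TTheory GRing.Theory Num.Theory.
Import numFieldNormedType.Exports.
Local Open Scope ring_scope.
Set Implicit Arguments.

(* With Q_w := 1 (x) <pi_w|, the operators factor as M_w |psi> = Q_w |Psi>, and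
   sum_w Q_w^dag Q_w = 1.  Setting a_w := Q_w |Psi> and b_w := Q_w |d Psi>, one gets
   <E_w> = <a_w|a_w>, <F_w> = i <b_w|a_w>, <G_w> = <b_w|b_w>, whose sums over all
   outcomes are <Psi|Psi> = 1, i <dPsi|Psi> and <dPsi|dPsi>.  Differentiating
   <Psi|Psi> = 1 makes f := <F_Omega> real, which gives the formula for I^Q.
   For a checkmark outcome, p I(sigma) = 4 (<G> - |<F>|^2 / <E>), because the
   derivative of the real normalisation only adds a multiple of the state.
   Hence I^Q/4 - sum_chk p I(sigma)/4 splits as
     sum_chk |<F_w> - f <E_w>|^2 / <E_w>  +  sum_times |b_w - i f a_w|^2,
   two sums of non-negative terms; losslessness says both vanish, and given the
   first, the second equals <G_times> - f <F_times>^*. *)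

Section ComplexDerivative.
Context {R : realType}.
Local Notation C := (R[i]).

Definition is_cderive (f : R -> C) (t : R) (df : C) : Prop :=
  is_derive t 1 (@complex.Re R \o f) (complex.Re df) /\
  is_derive t 1 (@complex.Im R \o f) (complex.Im df).

Lemma cderiv_val f t df : is_cderive f t df -> cderiv f t = df.
Proof.
case=> hRe hIm; rewrite /cderiv !derive1E (@derive_val _ _ _ _ _ _ _ hRe)
  (@derive_val _ _ _ _ _ _ _ hIm).
by case: df {hRe hIm}.
Qed.

Lemma is_cderive_unique f t d1 d2 : is_cderive f t d1 -> is_cderive f t d2 -> d1 = d2.
Proof. by move=> /cderiv_val <- /cderiv_val <-. Qed.

Lemma is_cderive_ext f g t df : is_cderive f t df -> f =1 g -> is_cderive g t df.
Proof. by move=> hf /funext <-. Qed.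

Lemma is_cderive_cst (a : C) t : is_cderive (fun=> a) t 0.
Proof. by split; apply: is_derive_cst. Qed.

Lemma is_cderiveD f g t df dg : is_cderive f t df -> is_cderive g t dg ->
  is_cderive (fun s => f s + g s) t (df + dg).
Proof.
case=> f1 f2 [g1 g2]; split.
- have -> : @complex.Re R \o (fun s => f s + g s) =
            (@complex.Re R \o f) + (@complex.Re R \o g).
    by apply/funext => s; rewrite /comp !fctE /comp; case: (f s); case: (g s).
  by case: df f1 f2 => ? ?; case: dg g1 g2 => ? ? /= *; apply: is_deriveD.
- have -> : @complex.Im R \o (fun s => f s + g s) =
            (@complex.Im R \o f) + (@complex.Im R \o g).
    by apply/funext => s; rewrite /comp !fctE /comp; case: (f s); case: (g s).
  by case: df f1 f2 => ? ?; case: dg g1 g2 => ? ? /= *; apply: is_deriveD.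
Qed.

Lemma is_cderiveM f g t df dg : is_cderive f t df -> is_cderive g t dg ->
  is_cderive (fun s => f s * g s) t (df * g t + f t * dg).
Proof.
case=> f1 f2 [g1 g2]; split.
- have -> : @complex.Re R \o (fun s => f s * g s) =
     (@complex.Re R \o f) * (@complex.Re R \o g) -
     (@complex.Im R \o f) * (@complex.Im R \o g).
    by apply/funext => s; rewrite /comp !fctE /comp; case: (f s); case: (g s).
  apply: is_derive_eq (is_deriveB (is_deriveM f1 g1) (is_deriveM f2 g2)) _.
  rewrite /comp; clear f1 f2 g1 g2.
  by case: (f t) (g t) df dg => ? ? [? ?] [? ?] [? ?] /=; rewrite /GRing.scale /=; ring.
- have -> : @complex.Im R \o (fun s => f s * g s) =
     (@complex.Re R \o f) * (@complex.Im R \o g) +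
     (@complex.Im R \o f) * (@complex.Re R \o g).
    by apply/funext => s; rewrite /comp !fctE /comp; case: (f s); case: (g s).
  apply: is_derive_eq (is_deriveD (is_deriveM f1 g2) (is_deriveM f2 g1)) _.
  rewrite /comp; clear f1 f2 g1 g2.
  by case: (f t) (g t) df dg => ? ? [? ?] [? ?] [? ?] /=; rewrite /GRing.scale /=; ring.
Qed.

Lemma is_cderiveJ f t df : is_cderive f t df -> is_cderive (fun s => (f s)^*) t df^*.
Proof.
case=> f1 f2; split.
- have -> : @complex.Re R \o (fun s => (f s)^*) = @complex.Re R \o f.
    by apply/funext => s; rewrite /comp; case: (f s).
  by case: df f1 f2.
- have -> : @complex.Im R \o (fun s => (f s)^*) = - (@complex.Im R \o f).
    by apply/funext => s; rewrite /comp fctE /comp; case: (f s).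
  by case: df f1 f2 => ? ? /= _ /is_deriveN.
Qed.

Lemma is_cderive_sum (I : Type) (r : seq I) (P : pred I) (F : I -> R -> C) dF t :
  (forall i, P i -> is_cderive (F i) t (dF i)) ->
  is_cderive (fun s => \sum_(i <- r | P i) F i s) t (\sum_(i <- r | P i) dF i).
Proof.
move=> hF; elim: r => [|a r IH].
  by rewrite big_nil; apply: is_cderive_ext (is_cderive_cst 0 t) _ => s; rewrite big_nil.
rewrite big_cons; case: ifP => Pa.
  by apply: is_cderive_ext (is_cderiveD (hF a Pa) IH) _ => s; rewrite big_cons Pa.
by apply: is_cderive_ext IH _ => s; rewrite big_cons Pa.
Qed.

Lemma is_cderive_invsqrt (q : R -> C) t dq :
  (forall s, 0 <= q s) -> 0 < q t -> is_cderive q t dq ->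
  exists r : R, is_cderive (fun s => (sqrtC (q s))^-1) t r%:C%C.
Proof.
move=> q_ge0 qt_gt0 [hRe _].
have invsqrtE s : (sqrtC (q s))^-1 = ((Num.sqrt (complex.Re (q s)))^-1)%:C%C.
  have qsE : (complex.Re (q s))%:C%C = q s by apply/RRe_real/ger0_real.
  have Req_ge0 : 0 <= complex.Re (q s) by rewrite -ler0c qsE.
  rewrite -[in LHS]qsE -[X in sqrtC X%:C%C](sqr_sqrtr Req_ge0) rmorphXn /=.
  by rewrite sqrCK ?ler0c ?sqrtr_ge0 // fmorphV.
have sqrt_neq0 : (Num.sqrt \o (@complex.Re R \o q)) t != 0.
  by move: qt_gt0; rewrite ltcE => /andP[_ ?]; rewrite /= gt_eqF // sqrtr_gt0.
eexists; split.
- have -> : @complex.Re R \o (fun s => (sqrtC (q s))^-1) =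
            (fun s => ((Num.sqrt \o (@complex.Re R \o q)) s)^-1).
    by apply/funext => s /=; rewrite invsqrtE.
  apply: is_deriveV sqrt_neq0 (is_derive1_comp _ hRe).
  by apply: is_derive1_sqrt; move: qt_gt0; rewrite ltcE => /andP[_].
- have -> : @complex.Im R \o (fun s => (sqrtC (q s))^-1) = cst 0.
    by apply/funext => s /=; rewrite invsqrtE.
  exact: is_derive_cst.
Qed.

Definition is_mderive {m n} (F : R -> 'M[C]_(m, n)) t (dF : 'M[C]_(m, n)) :=
  forall i j, is_cderive (fun s => F s i j) t (dF i j).

Lemma mderiv_val m n (F : R -> 'M[C]_(m, n)) t dF :
  is_mderive F t dF -> mderiv F t = dF.
Proof. by move=> hF; apply/matrixP => i j; rewrite mxE; apply: cderiv_val. Qed.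

Lemma is_mderive_ext m n (F G : R -> 'M[C]_(m, n)) t dF :
  is_mderive F t dF -> F =1 G -> is_mderive G t dF.
Proof. by move=> hF /funext <-. Qed.

Lemma is_mderive_cst m n (A : 'M[C]_(m, n)) t : is_mderive (fun=> A) t 0.
Proof. by move=> i j; rewrite mxE; apply: is_cderive_cst. Qed.

Lemma is_mderive_C1 m n (F : R -> 'M[C]_(m, n)) t :
  C1mx F -> is_mderive F t (mderiv F t).
Proof.
move=> hF i j; have [hRe [hIm _]] := hF i j; rewrite mxE /cderiv.
by split; rewrite /= derive1E; apply: derivableP.
Qed.

Lemma is_mderiveM m n p (F : R -> 'M[C]_(m, n)) (G : R -> 'M[C]_(n, p)) t dF dG :
  is_mderive F t dF -> is_mderive G t dG ->
  is_mderive (fun s => F s *m G s) t (dF *m G t + F t *m dG).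
Proof.
move=> hF hG i j.
have := is_cderive_sum (index_enum 'I_n) xpredT (fun k s => F s i k * G s k j) _
  (fun k _ => is_cderiveM (hF i k) (hG k j)).
move=> /is_cderive_ext h; rewrite !mxE -big_split.
by apply: h => s; rewrite mxE.
Qed.

Lemma is_mderive_mulmxl m n p (A : 'M[C]_(m, n)) (G : R -> 'M[C]_(n, p)) t dG :
  is_mderive G t dG -> is_mderive (fun s => A *m G s) t (A *m dG).
Proof.
move=> hG; have := is_mderiveM (is_mderive_cst A t) hG.
by rewrite mul0mx add0r.
Qed.

Lemma is_mderive_mulmxr m n p (F : R -> 'M[C]_(m, n)) (B : 'M[C]_(n, p)) t dF :
  is_mderive F t dF -> is_mderive (fun s => F s *m B) t (dF *m B).
Proof.
move=> hF; have := is_mderiveM hF (is_mderive_cst B t).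
by rewrite mulmx0 addr0.
Qed.

Lemma is_mderive_adj m n (F : R -> 'M[C]_(m, n)) t dF :
  is_mderive F t dF -> is_mderive (fun s => adj (F s)) t (adj dF).
Proof.
move=> hF i j; rewrite !mxE.
by apply: is_cderive_ext (is_cderiveJ (hF j i)) _ => s; rewrite !mxE.
Qed.

Lemma is_mderiveZ m n (c : R -> C) (F : R -> 'M[C]_(m, n)) t dc dF :
  is_cderive c t dc -> is_mderive F t dF ->
  is_mderive (fun s => c s *: F s) t (dc *: F t + c t *: dF).
Proof.
move=> hc hF i j; rewrite !mxE.
by apply: is_cderive_ext (is_cderiveM hc (hF i j)) _ => s; rewrite !mxE.
Qed.

Lemma is_cderive_dotc n (u v : R -> 'cV[C]_n) t du dv :
  is_mderive u t du -> is_mderive v t dv ->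
  is_cderive (fun s => dotc (u s) (v s)) t (dotc du (v t) + dotc (u t) dv).
Proof.
move=> hu hv; have := is_mderiveM (is_mderive_adj hu) hv 0 0.
by rewrite mxE.
Qed.

End ComplexDerivative.

Section InnerProduct.
Context {R : realType}.
Local Notation C := (R[i]).

Lemma adjM m n p (A : 'M[C]_(m, n)) (B : 'M[C]_(n, p)) : adj (A *m B) = adj B *m adj A.
Proof. by rewrite /adj map_mxM trmx_mul. Qed.

Lemma adjD m n (A B : 'M[C]_(m, n)) : adj (A + B) = adj A + adj B.
Proof. by apply/matrixP => i j; rewrite !mxE rmorphD. Qed.

Lemma adjZ m n a (A : 'M[C]_(m, n)) : adj (a *: A) = a^* *: adj A.
Proof. by apply/matrixP => i j; rewrite !mxE rmorphM. Qed.

Lemma dotcE n (u v : 'cV[C]_n) : dotc u v = \sum_i (u i 0)^* * v i 0.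
Proof. by rewrite /dotc mxE; apply: eq_bigr => i _; rewrite !mxE. Qed.

Lemma dotcC n (u v : 'cV[C]_n) : dotc v u = (dotc u v)^*.
Proof.
by rewrite !dotcE rmorph_sum; apply: eq_bigr => i _; rewrite rmorphM /= conjCK mulrC.
Qed.

Lemma dotc_ge0 n (u : 'cV[C]_n) : 0 <= dotc u u.
Proof. by rewrite dotcE; apply: sumr_ge0 => i _; rewrite mulrC mul_conjC_ge0. Qed.

Lemma dotcDl n (u v w : 'cV[C]_n) : dotc (u + v) w = dotc u w + dotc v w.
Proof. by rewrite /dotc adjD mulmxDl mxE. Qed.

Lemma dotcDr n (u v w : 'cV[C]_n) : dotc w (u + v) = dotc w u + dotc w v.
Proof. by rewrite /dotc mulmxDr mxE. Qed.

Lemma dotcZl n a (u v : 'cV[C]_n) : dotc (a *: u) v = a^* * dotc u v.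
Proof. by rewrite /dotc adjZ -scalemxAl mxE. Qed.

Lemma dotcZr n a (u v : 'cV[C]_n) : dotc u (a *: v) = a * dotc u v.
Proof. by rewrite /dotc -scalemxAr mxE. Qed.

Lemma dotcBl n (u v w : 'cV[C]_n) : dotc (u - v) w = dotc u w - dotc v w.
Proof. by rewrite dotcDl -scaleN1r dotcZl rmorphN /= conjC1 mulN1r. Qed.

Lemma dotcBr n (u v w : 'cV[C]_n) : dotc w (u - v) = dotc w u - dotc w v.
Proof. by rewrite dotcC dotcBl rmorphB /= -!dotcC. Qed.

Lemma dotc_mulmxl m n (A : 'M[C]_(m, n)) u v : dotc (A *m u) v = dotc u (adj A *m v).
Proof. by rewrite /dotc adjM mulmxA. Qed.

Lemma dotc_sumr n (I : Type) (r : seq I) (P : pred I) (F : I -> 'cV[C]_n) u :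
  dotc u (\sum_(i <- r | P i) F i) = \sum_(i <- r | P i) dotc u (F i).
Proof. by rewrite /dotc mulmx_sumr summxE. Qed.

Lemma expect_adjM n k (psi : 'cV[C]_n) (A B : 'M[C]_(k, n)) :
  expect psi (adj A *m B) = dotc (A *m psi) (B *m psi).
Proof. by rewrite /expect /dotc adjM !mulmxA. Qed.

Lemma expectZ n (psi : 'cV[C]_n) a A : expect psi (a *: A) = a * expect psi A.
Proof. by rewrite /expect -scalemxAl dotcZr. Qed.

Lemma expect_sum n (psi : 'cV[C]_n) (I : Type) (r : seq I) (P : pred I) F :
  expect psi (\sum_(i <- r | P i) F i) = \sum_(i <- r | P i) expect psi (F i).
Proof. by rewrite /expect mulmx_suml dotc_sumr. Qed.

Lemma expect_adj n (psi : 'cV[C]_n) A : expect psi (adj A) = (expect psi A)^*.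
Proof. by rewrite /expect -dotcC dotc_mulmxl. Qed.

Lemma mulCi_real (z : C) : ('i%C * z \is Num.real) = (z + z^* == 0).
Proof.
rewrite complexiE CrealE rmorphM /= conjCi mulNr -subr_eq0 -opprD -mulrDr oppr_eq0.
by rewrite mulf_eq0 (negbTE (neq0Ci _)) addrC.
Qed.

Lemma dotc_shift_ge0 n (a b : 'cV[C]_n) (f : C) :
  f \is Num.real ->
  0 <= dotc b b + f ^+ 2 * dotc a a - f * ('i%C * dotc b a + ('i%C * dotc b a)^*).
Proof.
move=> /conj_Creal fJ.
suff -> : dotc b b + f ^+ 2 * dotc a a - f * ('i%C * dotc b a + ('i%C * dotc b a)^*)
  = dotc (b - ('i%C * f) *: a) (b - ('i%C * f) *: a) by apply: dotc_ge0.
rewrite !(dotcBl, dotcBr, dotcZl, dotcZr) [dotc a b]dotcC.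
rewrite !(rmorphM, rmorphD) /= !complexiE conjCi fJ.
apply/eqP; rewrite -subr_eq0; apply/eqP.
transitivity (('i ^+ 2 + 1) * f ^+ 2 * dotc a a); first ring.
by rewrite sqrCi addNr !mul0r.
Qed.

End InnerProduct.

Section NormalizedQFI.
Context {R : realType}.
Local Notation C := (R[i]).

(* d |-> <d|d> - |<s|d>|^2 is invariant under d |-> d + c s for a unit vector s;
   here s = g m and the real derivative r of the normalisation contributes c = r / g. *)
Lemma normalized_variance n (m d : 'cV[C]_n) (g r : C) :
  g \is Num.real -> r \is Num.real -> g ^+ 2 * dotc m m = 1 ->
  dotc m m * (dotc (r *: m + g *: d) (r *: m + g *: d)
              - `|dotc (g *: m) (r *: m + g *: d)| ^+ 2)
  = dotc d d - `|dotc m d| ^+ 2 / dotc m m.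
Proof.
move=> /conj_Creal gJ /conj_Creal rJ gp1.
have p_neq0 : dotc m m != 0.
  by apply/eqP => p0; move: gp1; rewrite p0 mulr0 => /eqP; rewrite eq_sym oner_eq0.
have pJ : (dotc m m)^* = dotc m m by rewrite -dotcC.
have pV : (dotc m m)^-1 = g ^+ 2 by apply: (mulIf p_neq0); rewrite mulVf.
rewrite !normCK !(dotcDl, dotcDr, dotcZl, dotcZr) !(rmorphD, rmorphM) /= gJ rJ pJ.
rewrite [dotc d m]dotcC pV gJ.
set p := dotc m m; set a := dotc m d; set G := dotc d d.
apply/eqP; rewrite -subr_eq0; apply/eqP.
transitivity ((g ^+ 2 * p - 1) *
  (G - a * a^* * g ^+ 2 - r ^+ 2 * p ^+ 2 - p * r * g * (a + a^*))); first ring.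
by rewrite gp1 subrr mul0r.
Qed.

Lemma QFI_normalize n (v : R -> 'cV[C]_n) x dv :
  is_mderive v x dv -> 0 < dotc (v x) (v x) ->
  dotc (v x) (v x) * QFI (fun t => (sqrtC (dotc (v t) (v t)))^-1 *: v t) x
  = 4%:R * (dotc dv dv - `|dotc (v x) dv| ^+ 2 / dotc (v x) (v x)).
Proof.
move=> hv p_gt0.
have [r hr] := is_cderive_invsqrt (fun t => dotc_ge0 (v t)) p_gt0 (is_cderive_dotc hv hv).
rewrite /QFI (mderiv_val (is_mderiveZ hr hv)) mulrCA; congr (_ * _).
apply: normalized_variance.
- by rewrite realV sqrtC_real // ltW.
- by apply/CrealP; exact: conjc_real.
- by rewrite exprVn sqrtCK mulVf // lt0r_neq0.
Qed.

End NormalizedQFI.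

Section LosslessCriterion.
Context {R : realType} {I : finType}.
Local Notation C := (R[i]).
Variables (chk : {set I}) (p G F : I -> C) (f : C).
(* In the application, the left-hand side of [H_ge0] is |Q_w (dPsi - i f Psi)|^2. *)
Hypotheses (f_real : f \is Num.real) (p_ge0 : forall w, 0 <= p w)
  (p_gt0 : forall w, w \in chk -> 0 < p w)
  (H_ge0 : forall w, 0 <= G w + f ^+ 2 * p w - f * (F w + (F w)^*))
  (sum_p : \sum_(w in [set: I]) p w = 1) (sum_F : \sum_(w in [set: I]) F w = f).

Let H w := G w + f ^+ 2 * p w - f * (F w + (F w)^*).
Let fJ : f^* = f := conj_Creal f_real.
Let pJ w : (p w)^* = p w := conj_Creal (ger0_real (p_ge0 w)).

Lemma sum_setT_split (h : I -> C) :
  \sum_(w in [set: I]) h w = \sum_(w in chk) h w + \sum_(w in ~: chk) h w.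
Proof. by rewrite (big_setID chk) /= finset.setTI finset.setTD. Qed.

Lemma sum_H : \sum_(w in [set: I]) H w = \sum_(w in [set: I]) G w - f ^+ 2.
Proof.
rewrite /H big_split /= sumrN big_split /= -!big_distrr /= big_split /=.
by rewrite -rmorph_sum /= sum_p sum_F fJ; ring.
Qed.

Lemma H_sub_defect w : w \in chk ->
  H w - `|F w - f * p w| ^+ 2 / p w = G w - `|F w| ^+ 2 / p w.
Proof.
move=> wc; have pw_neq0 : p w != 0 by rewrite gt_eqF ?p_gt0.
rewrite !normCK rmorphB rmorphM /= fJ pJ /H; field.
exact: pw_neq0.
Qed.

Lemma lossless_gap :
  \sum_(w in [set: I]) G w - f ^+ 2 - \sum_(w in chk) (G w - `|F w| ^+ 2 / p w)
  = \sum_(w in chk) `|F w - f * p w| ^+ 2 / p w + \sum_(w in ~: chk) H w.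
Proof.
rewrite -sum_H sum_setT_split -(eq_bigr _ H_sub_defect) [X in _ - X]sumrB.
by ring.
Qed.

Lemma sum_H_compl : (forall w, w \in chk -> F w = f * p w) ->
  \sum_(w in ~: chk) H w = \sum_(w in ~: chk) G w - f * (\sum_(w in ~: chk) F w)^*.
Proof.
move=> F_chk.
have sum_F_compl : \sum_(w in ~: chk) F w = f * \sum_(w in ~: chk) p w.
  apply: (addrI (\sum_(w in chk) F w)).
  by rewrite -sum_setT_split sum_F (eq_bigr _ F_chk) -big_distrr -mulrDr
    -sum_setT_split sum_p mulr1.
have sum_pJ : (\sum_(w in ~: chk) p w)^* = \sum_(w in ~: chk) p w.
  by rewrite rmorph_sum; apply: eq_bigr => w _; exact: pJ.
rewrite /H big_split /= sumrN big_split /= -!big_distrr /= big_split /=.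
by rewrite -rmorph_sum /= sum_F_compl rmorphM /= fJ sum_pJ; ring.
Qed.

Lemma lossless_criterion :
  \sum_(w in chk) (G w - `|F w| ^+ 2 / p w) = \sum_(w in [set: I]) G w - f ^+ 2 <->
  (forall w, w \in chk -> F w = f * p w) /\
  \sum_(w in ~: chk) G w = f * (\sum_(w in ~: chk) F w)^*.
Proof.
have term_ge0 w : w \in chk -> 0 <= `|F w - f * p w| ^+ 2 / p w.
  by move=> wc; rewrite divr_ge0 ?exprn_ge0 // ltW ?p_gt0.
have defect_ge0 : 0 <= \sum_(w in chk) `|F w - f * p w| ^+ 2 / p w.
  exact: sumr_ge0.
have compl_ge0 : 0 <= \sum_(w in ~: chk) H w by apply: sumr_ge0 => w _; exact: H_ge0.
split.
- move=> /esym/eqP; rewrite -subr_eq0 lossless_gap (paddr_eq0 defect_ge0 compl_ge0).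
  case/andP=> /eqP defect0 /eqP compl0.
  have F_chk w : w \in chk -> F w = f * p w.
    move=> wc; have /eqP := psumr_eq0P term_ge0 defect0 wc.
    rewrite mulf_eq0 invr_eq0 (gt_eqF (p_gt0 wc)) orbF expf_eq0 /= normr_eq0 subr_eq0.
    by move/eqP.
  by split=> //; apply/eqP; rewrite -subr_eq0 -sum_H_compl // compl0.
- case=> F_chk G_compl.
  apply/esym/eqP; rewrite -subr_eq0 lossless_gap sum_H_compl // G_compl subrr addr0.
  by rewrite big1 // => w wc; rewrite F_chk // subrr normr0 expr2 !mul0r.
Qed.

End LosslessCriterion.

Lemma sum_delta {R : nzRingType} n (a : 'I_n) (f : 'I_n -> R) :
  \sum_k (a == k)%:R * f k = f a.
Proof.
rewrite (bigD1 a) //= eqxx mul1r big1 ?addr0 // => k; rewrite eq_sym => /negbTE ->.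
by rewrite mul0r.
Qed.

Lemma mxvec_index_eq m n (i1 i2 : 'I_m) (j1 j2 : 'I_n) :
  (mxvec_index i1 j1 == mxvec_index i2 j2) = (i1 == i2) && (j1 == j2).
Proof.
by rewrite /mxvec_index (inj_eq (@cast_ord_inj _ _ _)) (inj_eq (@enum_rank_inj _)).
Qed.

Section EnvironmentFactorization.
Context {R : realType}.
Local Notation C := (R[i]).
Variables (dS dE : nat) (psi : 'cV[C]_dS) (phiE : 'cV[C]_dE) (P : 'M[C]_dE).

(* [env_proj w] is 1 (x) <pi_w|, with pi_w the w-th column of P, and [env_embed]
   is 1 (x) |phi^E>. *)
Definition env_proj (w : 'I_dE) : 'M[C]_(dS, dS * dE) :=
  \matrix_(s, k) \sum_(e < dE) (P e w)^* * (k == mxvec_index s e)%:R.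
Definition env_embed : 'M[C]_(dS * dE, dS) :=
  \matrix_(k, s) \sum_(e < dE) (k == mxvec_index s e)%:R * phiE e 0.

Lemma env_projE w s' s e : env_proj w s' (mxvec_index s e) = (s == s')%:R * (P e w)^*.
Proof.
rewrite mxE (eq_bigr (fun e' => (e == e')%:R * ((s == s')%:R * (P e' w)^*))).
  by rewrite sum_delta.
by move=> e' _; rewrite mxvec_index_eq -mulnb natrM; ring.
Qed.

Lemma env_embedE s e s' : env_embed (mxvec_index s e) s' = (s == s')%:R * phiE e 0.
Proof.
rewrite mxE (eq_bigr (fun e' => (e == e')%:R * ((s == s')%:R * phiE e' 0))).
  by rewrite sum_delta.
by move=> e' _; rewrite mxvec_index_eq -mulnb natrM; ring.
Qed.

Lemma mul_env_proj p w (Y : 'M[C]_(dS * dE, p)) s l :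
  (env_proj w *m Y) s l = \sum_(e < dE) (P e w)^* * Y (mxvec_index s e) l.
Proof.
rewrite mxE; under eq_bigr => k _ do rewrite mxE big_distrl /=.
rewrite exchange_big /=; apply: eq_bigr => e _.
by under eq_bigr => k _ do rewrite mulrAC mulrC eq_sym; rewrite sum_delta.
Qed.

Lemma mul_env_embed p (Y : 'M[C]_(p, dS * dE)) i s :
  (Y *m env_embed) i s = \sum_(e < dE) Y i (mxvec_index s e) * phiE e 0.
Proof.
rewrite mxE; under eq_bigr => k _ do rewrite mxE big_distrr /=.
rewrite exchange_big /=; apply: eq_bigr => e _.
by under eq_bigr => k _ do rewrite mulrCA eq_sym; rewrite sum_delta.
Qed.

Lemma Mop_factor (U : R -> 'M[C]_(dS * dE)) w t :
  Mop phiE U P w t = env_proj w *m U t *m env_embed.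
Proof.
apply/matrixP => s' s; rewrite mul_env_embed mxE exchange_big /=.
by apply: eq_bigr => e _; rewrite mul_env_proj big_distrl.
Qed.

Lemma env_embed_mulmx : env_embed *m psi = kronv psi phiE.
Proof.
apply/matrixP => k j; rewrite ord1; case/mxvec_indexP: k => s e.
rewrite /kronv [RHS]mxE mxvecE !mxE big_ord1 mxE.
by under eq_bigr => s2 _ do rewrite env_embedE mulrAC -mulrA; rewrite sum_delta.
Qed.

Lemma adj_env_embed_mul : adj env_embed *m env_embed = (dotc phiE phiE)%:M.
Proof.
apply/matrixP => s1 s2; rewrite mul_env_embed !mxE dotcE -mulr_natr big_distrl /=.
apply: eq_bigr => e _; rewrite /adj 2!mxE env_embedE rmorphM /= conjC_nat eq_sym.
by case: (s1 == s2); rewrite ?mul1r ?mul0r ?mulr1 ?mulr0.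
Qed.

Lemma adjM_entry m n p (A : 'M[C]_(m, n)) (B : 'M[C]_(m, p)) i j :
  (adj A *m B) i j = \sum_k (A k i)^* * B k j.
Proof. by rewrite mxE; apply: eq_bigr => k _; rewrite !mxE. Qed.

Lemma sum_adj_env_proj_mul : unitary P -> \sum_w adj (env_proj w) *m env_proj w = 1%:M.
Proof.
case=> _ PP; apply/matrixP => k l; rewrite summxE.
case/mxvec_indexP: k => s1 e1; case/mxvec_indexP: l => s2 e2.
rewrite [RHS]mxE mxvec_index_eq.
rewrite (eq_bigr (fun w => (s1 == s2)%:R * (P e1 w * (P e2 w)^*))); last first.
  move=> w _; rewrite adjM_entry.
  rewrite (eq_bigr (fun s => (s1 == s)%:R * ((s2 == s)%:R * (P e1 w * (P e2 w)^*)))).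
    by rewrite sum_delta eq_sym.
  by move=> s _; rewrite !env_projE rmorphM /= conjC_nat conjCK; ring.
have : (P *m adj P) e1 e2 = (e1 == e2)%:R by rewrite PP mxE.
rewrite -big_distrr /= mxE => PP_e.
rewrite (eq_bigr (fun j => P e1 j * adj P j e2)); last by move=> j _; rewrite !mxE.
by rewrite PP_e -natrM mulnb.
Qed.

End EnvironmentFactorization.

Section MeasuredEncoding.
Context {R : realType}.
Local Notation C := (R[i]).
Variables (dS dE : nat) (psi : 'cV[C]_dS) (phiE : 'cV[C]_dE)
  (U : R -> 'M[C]_(dS * dE)) (P : 'M[C]_dE) (x : R).
Hypotheses (psi_norm : dotc psi psi = 1) (phiE_norm : dotc phiE phiE = 1)
  (U_C1 : C1mx U) (U_unitary : forall t, unitary (U t)) (P_unitary : unitary P).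

Local Notation Psi := (PsiSE psi phiE U).
Local Notation dPsi := (mderiv (PsiSE psi phiE U) x).
Local Notation Q := (env_proj dS P).

Lemma Mop_mulmx w t : Mop phiE U P w t *m psi = Q w *m Psi t.
Proof. by rewrite Mop_factor -!mulmxA env_embed_mulmx. Qed.

Lemma prob_expect_Eop w t : prob psi phiE U P w t = expect psi (Eop phiE U P w t).
Proof. by rewrite /Eop expect_adjM. Qed.

Lemma sum_dotc_env_proj u v :
  \sum_(w in [set: 'I_dE]) dotc (Q w *m u) (Q w *m v) = dotc u v.
Proof.
under eq_bigl do rewrite finset.in_setT.
under eq_bigr do rewrite dotc_mulmxl mulmxA.
by rewrite -dotc_sumr -mulmx_suml sum_adj_env_proj_mul // mul1mx.
Qed.

Lemma dotc_PsiSE t : dotc (Psi t) (Psi t) = 1.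
Proof.
rewrite /PsiSE dotc_mulmxl mulmxA (U_unitary t).1 mul1mx -env_embed_mulmx.
by rewrite dotc_mulmxl mulmxA adj_env_embed_mul phiE_norm mul1mx psi_norm.
Qed.

Lemma mderiv_PsiSE : dPsi = mderiv U x *m kronv psi phiE.
Proof. exact/mderiv_val/is_mderive_mulmxr/is_mderive_C1. Qed.

Lemma is_mderive_PsiSE : is_mderive Psi x dPsi.
Proof. by rewrite mderiv_PsiSE; apply/is_mderive_mulmxr/is_mderive_C1. Qed.

Lemma is_mderive_psit w : is_mderive (psit psi phiE U P w) x (Q w *m dPsi).
Proof.
apply: is_mderive_ext (is_mderive_mulmxl (Q w) is_mderive_PsiSE) _ => t.
by rewrite /psit Mop_mulmx.
Qed.

Lemma mderiv_Mop_mulmx w : mderiv (Mop phiE U P w) x *m psi = Q w *m dPsi.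
Proof.
have dM : is_mderive (Mop phiE U P w) x (Q w *m mderiv U x *m env_embed dS phiE).
  apply: is_mderive_ext (is_mderive_mulmxr _ (is_mderive_mulmxl _ (is_mderive_C1 x U_C1))) _.
  by move=> t; rewrite Mop_factor.
by rewrite (mderiv_val dM) mderiv_PsiSE -!mulmxA env_embed_mulmx.
Qed.

Lemma expect_Eop w : expect psi (Eop phiE U P w x) = dotc (Q w *m Psi x) (Q w *m Psi x).
Proof. by rewrite -prob_expect_Eop /prob /psit Mop_mulmx. Qed.

Lemma expect_Fop w :
  expect psi (Fop phiE U P w x) = 'i%C * dotc (Q w *m dPsi) (Q w *m Psi x).
Proof. by rewrite /Fop expectZ expect_adjM mderiv_Mop_mulmx Mop_mulmx. Qed.

Lemma expect_Gop w : expect psi (Gop phiE U P w x) = dotc (Q w *m dPsi) (Q w *m dPsi).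
Proof. by rewrite /Gop expect_adjM mderiv_Mop_mulmx. Qed.

Lemma sum_expect_Eop : \sum_(w in [set: 'I_dE]) expect psi (Eop phiE U P w x) = 1.
Proof. by under eq_bigr do rewrite expect_Eop; rewrite sum_dotc_env_proj dotc_PsiSE. Qed.

Lemma expect_Fset_setT :
  expect psi (Fset phiE U P [set: 'I_dE] x) = 'i%C * dotc dPsi (Psi x).
Proof.
rewrite /Fset expect_sum; under eq_bigr do rewrite expect_Fop.
by rewrite -big_distrr sum_dotc_env_proj.
Qed.

Lemma expect_Gset_setT : expect psi (Gset phiE U P [set: 'I_dE] x) = dotc dPsi dPsi.
Proof.
rewrite /Gset expect_sum; under eq_bigr do rewrite expect_Gop.
exact: sum_dotc_env_proj.
Qed.

Lemma expect_Fset_real : expect psi (Fset phiE U P [set: 'I_dE] x) \is Num.real.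
Proof.
have d_norm := is_cderive_dotc is_mderive_PsiSE is_mderive_PsiSE.
have d_one : is_cderive (fun t => dotc (Psi t) (Psi t)) x 0.
  by apply: is_cderive_ext (is_cderive_cst 1 x) _ => t; rewrite dotc_PsiSE.
by rewrite expect_Fset_setT mulCi_real -dotcC (is_cderive_unique d_norm d_one).
Qed.

Lemma QFI_PsiSE : QFI Psi x = 4%:R * (expect psi (Gset phiE U P [set: 'I_dE] x)
                               - expect psi (Fset phiE U P [set: 'I_dE] x) ^+ 2).
Proof.
rewrite -(real_normK expect_Fset_real) expect_Gset_setT expect_Fset_setT /QFI.
by rewrite normrM complexiE normCi mul1r [dotc dPsi (Psi x)]dotcC norm_conjC.
Qed.

Lemma prob_QFI_sigvec w : 0 < prob psi phiE U P w x ->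
  prob psi phiE U P w x * QFI (sigvec psi phiE U P w) x =
  4%:R * (expect psi (Gop phiE U P w x)
          - `|expect psi (Fop phiE U P w x)| ^+ 2 / expect psi (Eop phiE U P w x)).
Proof.
move=> prob_gt0; rewrite /sigvec /prob (QFI_normalize (is_mderive_psit w) prob_gt0).
rewrite expect_Eop expect_Fop expect_Gop /psit Mop_mulmx normrM complexiE normCi mul1r.
by rewrite [dotc (Q w *m dPsi) (Q w *m Psi x)]dotcC norm_conjC.
Qed.

Lemma sum_prob_QFI_sigvec (chk : {set 'I_dE}) :
  (forall w, w \in chk -> 0 < prob psi phiE U P w x) ->
  \sum_(w in chk) prob psi phiE U P w x * QFI (sigvec psi phiE U P w) x =
  4%:R * \sum_(w in chk) (expect psi (Gop phiE U P w x)
          - `|expect psi (Fop phiE U P w x)| ^+ 2 / expect psi (Eop phiE U P w x)).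
Proof. by move=> prob_gt0; rewrite big_distrr; apply: eq_bigr => w /prob_gt0/prob_QFI_sigvec. Qed.

Lemma cderiv_expect_Eop w : expect psi (Fop phiE U P w x) \is Num.real ->
  cderiv (fun t => expect psi (Eop phiE U P w t)) x = 0.
Proof.
have d_prob := is_cderive_dotc (is_mderive_psit w) (is_mderive_psit w).
rewrite expect_Fop mulCi_real => /eqP dFJ.
rewrite (cderiv_val (is_cderive_ext d_prob (prob_expect_Eop w))).
by rewrite /psit Mop_mulmx [dotc (_ *m Psi x) _]dotcC.
Qed.

End MeasuredEncoding.

Theorem theorem3 (R : realType) (dS dE : nat)
  (psi : 'cV[R[i]]_dS) (phiE : 'cV[R[i]]_dE)
  (U : R -> 'M[R[i]]_(dS * dE)) (P : 'M[R[i]]_dE)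
  (chk : {set 'I_dE}) (x : R) :
  dotc psi psi = 1 ->
  dotc phiE phiE = 1 ->
  C1mx U ->
  (forall t, unitary (U t)) ->
  unitary P ->
  (forall w, w \in chk -> 0 < prob psi phiE U P w x) ->
  let FOm := expect psi (Fset phiE U P [set: 'I_dE] x) in
  let IQ := QFI (PsiSE psi phiE U) x in
  let lossless :=
    \sum_(w in chk) prob psi phiE U P w x * QFI (sigvec psi phiE U P w) x = IQ in
  [/\ FOm \is Num.real,
      IQ = 4%:R * (expect psi (Gset phiE U P [set: 'I_dE] x) - FOm ^+ 2),
      lossless <->
        ((forall w, w \in chk ->
            expect psi (Fop phiE U P w x) = FOm * expect psi (Eop phiE U P w x)) /\
         expect psi (Gset phiE U P (~: chk) x) =
            FOm * expect psi (adj (Fset phiE U P (~: chk) x)))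
    & lossless ->
      forall w, w \in chk ->
        cderiv (fun t => expect psi (Eop phiE U P w t)) x = 0].
Proof.
move=> psi_norm phiE_norm U_C1 U_unitary P_unitary prob_gt0 FOm IQ lossless.
have FOm_real : FOm \is Num.real by apply: expect_Fset_real.
have IQE : IQ = 4%:R * (expect psi (Gset phiE U P [set: 'I_dE] x) - FOm ^+ 2).
  by apply: QFI_PsiSE.
pose p w := expect psi (Eop phiE U P w x).
pose G w := expect psi (Gop phiE U P w x).
pose F w := expect psi (Fop phiE U P w x).
have p_ge0 w : 0 <= p w by rewrite /p -prob_expect_Eop dotc_ge0.
have p_gt0 w : w \in chk -> 0 < p w by rewrite /p -prob_expect_Eop; apply: prob_gt0.
have H_ge0 w : 0 <= G w + FOm ^+ 2 * p w - FOm * (F w + (F w)^*).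
  by rewrite /G /p /F expect_Gop // expect_Eop // expect_Fop //; apply: dotc_shift_ge0.
have sum_p : \sum_(w in [set: 'I_dE]) p w = 1 by apply: sum_expect_Eop.
have sum_F : \sum_(w in [set: 'I_dE]) F w = FOm by rewrite /FOm /Fset expect_sum.
have lossless_iff : lossless <->
  ((forall w, w \in chk -> F w = FOm * p w) /\
   expect psi (Gset phiE U P (~: chk) x) = FOm * expect psi (adj (Fset phiE U P (~: chk) x))).
  rewrite /Gset /Fset expect_adj !expect_sum.
  apply: iff_trans (lossless_criterion p G F FOm_real p_ge0 p_gt0 H_ge0 sum_p sum_F).
  rewrite /lossless IQE sum_prob_QFI_sigvec // /Gset expect_sum.
  by split=> [|-> //]; apply: mulfI; rewrite pnatr_eq0.
split=> // /lossless_iff[F_chk _] w wc.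
apply: cderiv_expect_Eop => //.
by rewrite -/(F w) (F_chk w wc) (rpredM FOm_real (ger0_real (p_ge0 w))).
Qed.
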